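(* In the Uniform Price Auction, for every value profile and every agent $i$, the payment satisfies $\pi_i\le B_i$.
   Context: Uniform Price Auction: one unit of a divisible good, $n$ agents with values per unit $v_i>0$ and publicly known budgets $B_i>0$. Relabel agents so that $v_1\ge\dots\ge v_n$ and set $v_{n+1}=0$. Let $k\in\{0,\dots,n\}$ be the largest integer with $\sum_{j=1}^kB_j\le v_k$ (the empty sum is $0$, and $k=0$ is always admissible). Case I: if $\sum_{j=1}^kB_j>v_{k+1}$, allocate $x_i=B_i/\sum_{j=1}^kB_j$ for $i\le k$ and $0$ to everyone else. Case II: if $\sum_{j=1}^kB_j\le v_{k+1}$, allocate $x_i=B_i/v_{k+1}$ for $i\le k$, $x_{k+1}=1-\sum_{j=1}^kx_j$, and $0$ to everyone else. Payments are given by Myerson's formula $\pi_i(v)=v_ix_i(v)-\int_0^{v_i}x_i(u,v_{-i})\,du$. *)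

From Stdlib Require Import Reals Lra List Arith.
Import ListNotations.
Open Scope R_scope.

(* Agents are 0, ..., n-1; a value profile is v : nat -> R, budgets B : nat -> R
   (entries at indices >= n are irrelevant). *)

(* Insert agent i into a list of agents sorted by decreasing value, after all
   agents with value >= v i (so ties are broken by original index, since
   agents are inserted in increasing index order). *)
Fixpoint ins (v : nat -> R) (i : nat) (l : list nat) : list nat :=
  match l with
  | nil => [i]
  | j :: l' => if Rlt_dec (v j) (v i) then i :: l else j :: ins v i l'
  end.

(* The relabeling: the list of agents sorted so that v_1 >= ... >= v_n
   (position 0 of the list is the agent relabeled "1"). *)
Definition sorted_agents (n : nat) (v : nat -> R) : list nat :=
  fold_left (fun l i => ins v i l) (seq 0 n) nil.

(* rank of agent i: its position (0-based) in the sorted list;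
   agent i gets new label rank i + 1. *)
Fixpoint pos (i : nat) (l : list nat) : nat :=
  match l with
  | nil => 0
  | j :: l' => if Nat.eqb j i then 0 else S (pos i l')
  end.

Definition rank (n : nat) (v : nat -> R) (i : nat) : nat :=
  pos i (sorted_agents n v).

(* sorted value v_m for m = 1..n, and v_{n+1} = 0 (1-based as in the paper) *)
Definition vsort (n : nat) (v : nat -> R) (m : nat) : R :=
  if andb (1 <=? m)%nat (m <=? n)%nat
  then v (nth (m - 1) (sorted_agents n v) 0%nat) else 0.

Definition Bsum (n : nat) (v B : nat -> R) (k : nat) : R :=
  fold_right Rplus 0 (map B (firstn k (sorted_agents n v))).

Fixpoint kfind (n : nat) (v B : nat -> R) (m : nat) : nat :=
  match m with
  | O => O
  | S m' => if Rle_dec (Bsum n v B (S m')) (vsort n v (S m')) then S m'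
            else kfind n v B m'
  end.

Definition kstar (n : nat) (v B : nat -> R) : nat := kfind n v B n.

Definition alloc (n : nat) (B v : nat -> R) (i : nat) : R :=
  let k := kstar n v B in
  let T := Bsum n v B k in
  let r := rank n v i in
  let w := vsort n v (S k) in
  if Rlt_dec w T then
    (if (r <? k)%nat then B i / T else 0)
  else
    (if (r <? k)%nat then B i / w
     else if Nat.eqb r k then 1 - T / w
     else 0).

Definition upd (v : nat -> R) (i : nat) (u : R) : nat -> R :=
  fun j => if Nat.eqb j i then u else v j.

From Pilot Require Import Defs.
From Stdlib Require Import Reals Lra Lia List Arith Sorting Permutation.
From Coquelicot Require Import Coquelicot.
Import ListNotations.
Open Scope R_scope.

(* Write f(u) = x_i(u, v_-i) for agent i's allocation as a function of its
   own value, so that pi_i = v_i x_i(v) - \int_0^{v_i} f.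

   If i is among the first k agents, let
      p = max(T, v_(k+1)) with T = B_1 + ... + B_k: then p x_i(v) = B_i, and
      raising i's value above p only permutes the first k agents, so f = x_i(v)
      beyond p (winner_alloc_stable).  Otherwise v_i x_i(v) <= B_i and we take
      p = v_i (loser_value_bound).
   3. Integrability.  Between consecutive breakpoints (values of the agents and
      subset sums of budgets) f is constant or equal to 1 - T/u with T
      at most the left end of the cell, hence integrable on [0, v_i].
   4. Since f >= 0 and f = x_i(v) on (p, v_i), the payment is at most
      p x_i(v) <= B_i (payment_below_threshold). *)

Definition precedes (w : nat -> R) (a b : nat) : Prop :=
  w b < w a \/ (w a = w b /\ (a < b)%nat).

Lemma precedes_trans w a b c : precedes w a b -> precedes w b c -> precedes w a c.
Proof.
  unfold precedes; intros [H|[H H']] [G|[G G']];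
    try (left; lra); right; split; [lra|lia].
Qed.

Lemma precedes_irrefl w a : ~ precedes w a a.
Proof. unfold precedes; intros [H|[_ H]]; [lra|lia]. Qed.

Lemma precedes_asym w a b : precedes w a b -> ~ precedes w b a.
Proof. intros Hab Hba. exact (precedes_irrefl w a (precedes_trans w a b a Hab Hba)). Qed.

Lemma precedes_value w a b : precedes w a b -> w b <= w a.
Proof. unfold precedes; intros [H|[H _]]; lra. Qed.

Section StronglySortedLists.
Context {A : Type}.
Variable Rel : A -> A -> Prop.

Lemma StronglySorted_nth l a b (d : A) :
  StronglySorted Rel l -> (a < b < length l)%nat -> Rel (nth a l d) (nth b l d).
Proof.
  intros H; revert a b; induction H as [|x l Hs IH Hf]; simpl; intros p q Hpq; [lia|].
  rewrite Forall_forall in Hf.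
  destruct p, q; try lia.
  - apply Hf, nth_In; lia.
  - apply IH; lia.
Qed.

Lemma StronglySorted_app l1 l2 :
  StronglySorted Rel l1 -> StronglySorted Rel l2 ->
  (forall x y, In x l1 -> In y l2 -> Rel x y) -> StronglySorted Rel (l1 ++ l2).
Proof.
  induction l1 as [|a l IH]; simpl; intros H1 H2 H12; auto.
  inversion H1; subst. constructor.
  - apply IH; auto.
  - rewrite Forall_forall in *. intros y Hy.
    apply in_app_or in Hy as [Hy|Hy]; auto.
Qed.

Lemma StronglySorted_app_inv l1 l2 : StronglySorted Rel (l1 ++ l2) ->
  StronglySorted Rel l1 /\ StronglySorted Rel l2 /\
  (forall x y, In x l1 -> In y l2 -> Rel x y).
Proof.
  induction l1 as [|a l IH]; simpl; intros H.
  - split; [constructor|split; auto; tauto].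
  - inversion H as [|? ? Hs Hf]; subst. destruct (IH Hs) as [Hs1 [Hs2 Hcross]].
    rewrite Forall_forall in Hf.
    split; [|split]; auto.
    + constructor; auto. rewrite Forall_forall. intros; apply Hf, in_or_app; auto.
    + intros x y [<-|Hx] Hy; [apply Hf, in_or_app|]; auto.
Qed.

Lemma StronglySorted_filter f l : StronglySorted Rel l -> StronglySorted Rel (filter f l).
Proof.
  induction 1 as [|a l _ IH Hf]; simpl; [constructor|].
  destruct (f a); auto. constructor; auto.
  rewrite Forall_forall in *. intros y Hy; apply filter_In in Hy; apply Hf; tauto.
Qed.

Lemma StronglySorted_transfer (Rel' : A -> A -> Prop) l :
  StronglySorted Rel l -> (forall x y, In x l -> In y l -> Rel x y -> Rel' x y) ->
  StronglySorted Rel' l.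
Proof.
  induction 1 as [|a l _ IH Hf]; intros H12; constructor.
  - apply IH; intros; apply H12; simpl; auto.
  - rewrite Forall_forall in *. intros y Hy. apply H12; simpl; auto.
Qed.

Hypothesis Rel_irrefl : forall a, ~ Rel a a.
Hypothesis Rel_asym : forall a b, Rel a b -> ~ Rel b a.

Lemma StronglySorted_NoDup l : StronglySorted Rel l -> NoDup l.
Proof.
  induction 1 as [|a l _ IH Hf]; constructor; auto.
  rewrite Forall_forall in Hf. intros Ha. exact (Rel_irrefl a (Hf a Ha)).
Qed.

Lemma StronglySorted_firstn_skipn_disjoint l k x : StronglySorted Rel l ->
  In x (firstn k l) -> ~ In x (skipn k l).
Proof.
  intros Hs Hx Hy. rewrite <- (firstn_skipn k l) in Hs.
  destruct (StronglySorted_app_inv _ _ Hs) as [_ [_ Hcross]].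
  exact (Rel_irrefl x (Hcross x x Hx Hy)).
Qed.

Lemma StronglySorted_unique l1 l2 :
  StronglySorted Rel l1 -> StronglySorted Rel l2 ->
  (forall x, In x l1 <-> In x l2) -> l1 = l2.
Proof.
  revert l2; induction l1 as [|a l1 IH]; intros l2 H1 H2 He.
  - destruct l2 as [|b l2]; auto. exfalso; apply (proj2 (He b)); simpl; auto.
  - destruct l2 as [|b l2]; [exfalso; apply (proj1 (He a)); simpl; auto|].
    inversion H1 as [|? ? Hs1 Hf1]; inversion H2 as [|? ? Hs2 Hf2]; subst.
    rewrite Forall_forall in Hf1, Hf2.
    assert (Hba : b = a).
    { destruct (proj1 (He a) (or_introl eq_refl)) as [|Ha]; auto.
      destruct (proj2 (He b) (or_introl eq_refl)) as [|Hb]; auto.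
      exfalso; exact (Rel_asym a b (Hf1 b Hb) (Hf2 a Ha)). }
    subst b. f_equal. apply IH; auto. intros x; split; intros Hx.
    + destruct (proj1 (He x) (or_intror Hx)) as [<-|]; auto.
      exfalso; exact (Rel_irrefl a (Hf1 a Hx)).
    + destruct (proj2 (He x) (or_intror Hx)) as [<-|]; auto.
      exfalso; exact (Rel_irrefl a (Hf2 a Hx)).
Qed.

End StronglySortedLists.

Lemma sorted_value_le w l a b :
  StronglySorted (precedes w) l -> (a <= b < length l)%nat ->
  w (nth b l 0%nat) <= w (nth a l 0%nat).
Proof.
  intros Hs Hab. destruct (Nat.eq_dec a b) as [->|]; [lra|].
  apply precedes_value, StronglySorted_nth; auto; lia.
Qed.

Lemma ins_In w j l x : In x (ins w j l) <-> In x (j :: l).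
Proof.
  induction l as [|a l IH]; simpl; [tauto|].
  destruct (Rlt_dec (w a) (w j)); simpl; [tauto|]. rewrite IH. simpl; tauto.
Qed.

Lemma ins_length w j l : length (ins w j l) = S (length l).
Proof. induction l as [|a l IH]; simpl; auto. destruct (Rlt_dec _ _); simpl; auto. Qed.

(* Inserting an agent with a larger index than all listed ones keeps the
   list sorted: it goes after all agents of equal value. *)
Lemma ins_sorted w j l : StronglySorted (precedes w) l ->
  (forall x, In x l -> (x < j)%nat) -> StronglySorted (precedes w) (ins w j l).
Proof.
  induction l as [|a l IH]; simpl; intros Hs Hl.
  - repeat constructor.
  - inversion Hs as [|? ? Hs' Hf]; subst. rewrite Forall_forall in Hf.
    destruct (Rlt_dec (w a) (w j)) as [Hlt|Hge].
    + constructor; [exact Hs|].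
      rewrite Forall_forall. intros y [<-|Hy]; [left; auto|].
      apply precedes_trans with a; [left|apply Hf]; auto.
    + constructor; [apply IH; auto|].
      rewrite Forall_forall. intros y Hy. apply ins_In in Hy as [<-|Hy]; auto.
      unfold precedes. destruct (Rle_lt_or_eq_dec _ _ (Rnot_lt_le _ _ Hge)); auto.
Qed.

Lemma sorted_agents_S n w : sorted_agents (S n) w = ins w n (sorted_agents n w).
Proof. unfold sorted_agents. rewrite seq_S, fold_left_app. reflexivity. Qed.

Lemma sorted_agents_spec n w :
  StronglySorted (precedes w) (sorted_agents n w) /\
  (forall x, In x (sorted_agents n w) <-> (x < n)%nat) /\
  length (sorted_agents n w) = n.
Proof.
  induction n as [|n [Hs [Hin Hlen]]].
  - split; [constructor|]. split; [simpl; intros; lia|reflexivity].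
  - rewrite sorted_agents_S. split; [|split].
    + apply ins_sorted; auto. intros x Hx; apply Hin; auto.
    + intros x. rewrite ins_In; simpl. rewrite Hin. lia.
    + rewrite ins_length; lia.
Qed.

Lemma length_sorted_agents n w : length (sorted_agents n w) = n.
Proof. apply sorted_agents_spec. Qed.

Lemma sorted_agents_NoDup n w : NoDup (sorted_agents n w).
Proof.
  apply (StronglySorted_NoDup (precedes w)); [apply precedes_irrefl|apply sorted_agents_spec].
Qed.

Lemma sorted_agents_unique n w l : StronglySorted (precedes w) l ->
  (forall x, In x l <-> (x < n)%nat) -> sorted_agents n w = l.
Proof.
  intros Hs Hin. destruct (sorted_agents_spec n w) as [Hs' [Hin' _]].
  apply (StronglySorted_unique (precedes w)); auto.
  - apply precedes_irrefl.
  - apply precedes_asym.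
  - intros x. rewrite Hin, Hin'. tauto.
Qed.

Lemma ins_ext w1 w2 j l : (forall a, In a l -> (w1 a < w1 j <-> w2 a < w2 j)) ->
  ins w1 j l = ins w2 j l.
Proof.
  induction l as [|a l IH]; simpl; intros H; auto.
  destruct (Rlt_dec (w1 a) (w1 j)) as [h1|h1], (Rlt_dec (w2 a) (w2 j)) as [h2|h2].
  - reflexivity.
  - exfalso; apply h2, H; auto.
  - exfalso; apply h1, H; auto.
  - f_equal; apply IH; auto.
Qed.

Lemma sorted_agents_ext n w1 w2 :
  (forall a b, (a < n)%nat -> (b < n)%nat -> (w1 a < w1 b <-> w2 a < w2 b)) ->
  sorted_agents n w1 = sorted_agents n w2.
Proof.
  induction n as [|n IH]; intros H; auto.
  rewrite !sorted_agents_S, IH by (intros; apply H; lia).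
  apply ins_ext. intros a Ha. apply (sorted_agents_spec n w2) in Ha. apply H; lia.
Qed.

Lemma pos_lt_length x l : In x l -> (Defs.pos x l < length l)%nat.
Proof.
  induction l as [|a l IH]; simpl; intros H; [tauto|].
  destruct (Nat.eqb_spec a x); [lia|].
  destruct H as [H|H]; [congruence|]. specialize (IH H); lia.
Qed.

Lemma nth_pos x l d : In x l -> nth (Defs.pos x l) l d = x.
Proof.
  induction l as [|a l IH]; simpl; intros H; [tauto|].
  destruct (Nat.eqb_spec a x); auto. destruct H; [congruence|auto].
Qed.

Lemma pos_nth l k d : NoDup l -> (k < length l)%nat -> Defs.pos (nth k l d) l = k.
Proof.
  revert k; induction l as [|a l IH]; simpl; intros k Hnd Hk; [lia|].
  inversion Hnd as [|? ? Ha Hnd']; subst.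
  destruct k as [|k]; [rewrite Nat.eqb_refl; auto|].
  destruct (Nat.eqb_spec a (nth k l d)) as [E|].
  - exfalso; apply Ha; rewrite E; apply nth_In; lia.
  - rewrite IH; auto; lia.
Qed.

Lemma pos_app_in x l1 l2 : In x l1 -> Defs.pos x (l1 ++ l2) = Defs.pos x l1.
Proof.
  induction l1 as [|a l IH]; simpl; intros H; [tauto|].
  destruct (Nat.eqb_spec a x); auto. destruct H; [congruence|auto].
Qed.

Lemma pos_app_notin x l1 l2 : ~ In x l1 ->
  Defs.pos x (l1 ++ l2) = (length l1 + Defs.pos x l2)%nat.
Proof.
  induction l1 as [|a l IH]; simpl; auto.
  destruct (Nat.eqb_spec a x); intros H; [tauto|]. rewrite IH; auto.
Qed.

Lemma pos_lt_iff x k l : In x l -> ((Defs.pos x l < k)%nat <-> In x (firstn k l)).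
Proof.
  intros Hx. rewrite <- (firstn_skipn k l) at 1.
  destruct (in_dec Nat.eq_dec x (firstn k l)) as [Hin|Hout].
  - rewrite pos_app_in by auto. split; auto. intros _.
    pose proof (pos_lt_length x _ Hin). rewrite length_firstn in *. lia.
  - rewrite pos_app_notin by auto. split; [|tauto]. intros Hlt; exfalso.
    rewrite length_firstn in Hlt.
    assert (Hl : (length l <= k)%nat) by lia.
    apply Hout. rewrite firstn_all2; auto.
Qed.

Lemma rank_lt_iff n w i k : (i < n)%nat ->
  ((rank n w i < k)%nat <-> In i (firstn k (sorted_agents n w))).
Proof. intros Hi. apply pos_lt_iff, sorted_agents_spec, Hi. Qed.

Lemma rank_eq_iff n w i k : (i < n)%nat ->
  (rank n w i = k <-> (k < n)%nat /\ nth k (sorted_agents n w) 0%nat = i).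
Proof.
  intros Hi. destruct (sorted_agents_spec n w) as [_ [Hin Hlen]].
  assert (HiL : In i (sorted_agents n w)) by (apply Hin; auto).
  unfold rank. split.
  - intros <-. split; [pose proof (pos_lt_length i _ HiL); lia|apply nth_pos; auto].
  - intros [Hk <-]. apply pos_nth; [apply sorted_agents_NoDup|lia].
Qed.

Definition sum_budgets (B : nat -> R) (l : list nat) : R := fold_right Rplus 0 (map B l).

Lemma sum_budgets_perm B l1 l2 : Permutation l1 l2 -> sum_budgets B l1 = sum_budgets B l2.
Proof. unfold sum_budgets; induction 1; simpl; lra. Qed.

Lemma sum_budgets_app B l1 l2 : sum_budgets B (l1 ++ l2) = sum_budgets B l1 + sum_budgets B l2.
Proof. unfold sum_budgets; rewrite map_app. induction l1; simpl; lra. Qed.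

Lemma sum_budgets_ge B l x : (forall y, In y l -> 0 <= B y) ->
  (0 <= sum_budgets B l) /\ (In x l -> B x <= sum_budgets B l).
Proof.
  unfold sum_budgets; induction l as [|a l IH]; simpl; intros H; [lra|].
  assert (0 <= B a) by auto. destruct IH as [IH1 IH2]; auto.
  split; [lra|]. intros [<-|Hx]; [lra|]. specialize (IH2 Hx); lra.
Qed.

Lemma Bsum_nonneg n w B k : (forall j, (j < n)%nat -> 0 <= B j) -> 0 <= Bsum n w B k.
Proof.
  intros HB. apply (sum_budgets_ge B _ 0%nat). intros x Hx.
  apply HB, (sorted_agents_spec n w). rewrite <- (firstn_skipn k (sorted_agents n w)).
  apply in_or_app; auto.
Qed.

Lemma firstn_S_nth {A : Type} (k : nat) (l : list A) (d : A) :
  (k < length l)%nat -> firstn (S k) l = firstn k l ++ [nth k l d].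
Proof.
  revert k; induction l as [|a l IH]; intros k H; simpl in H; [lia|].
  destruct k; auto. rewrite firstn_cons, IH by lia. auto.
Qed.

Lemma Bsum_S n w B k : (k < n)%nat ->
  Bsum n w B (S k) = Bsum n w B k + B (nth k (sorted_agents n w) 0%nat).
Proof.
  intros Hk. unfold Bsum. fold (sum_budgets B (firstn (S k) (sorted_agents n w))).
  rewrite (firstn_S_nth k _ 0%nat), sum_budgets_app by (rewrite length_sorted_agents; auto).
  unfold sum_budgets; simpl; lra.
Qed.

Lemma vsort_in n w m : (1 <= m <= n)%nat ->
  vsort n w m = w (nth (m - 1) (sorted_agents n w) 0%nat).
Proof.
  intros H. unfold vsort. replace ((1 <=? m) && (m <=? n))%bool with true; auto.
  symmetry; apply Bool.andb_true_iff; split; apply Nat.leb_le; lia.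
Qed.

Lemma vsort_out n w m : ~ (1 <= m <= n)%nat -> vsort n w m = 0.
Proof.
  intros H. unfold vsort. replace ((1 <=? m) && (m <=? n))%bool with false; auto.
  symmetry; apply Bool.andb_false_iff.
  destruct (Nat.le_gt_cases 1 m); [right|left]; apply Nat.leb_gt; lia.
Qed.

Lemma vsort_nonneg n w m : (forall j, (j < n)%nat -> 0 <= w j) -> 0 <= vsort n w m.
Proof.
  intros Hw. destruct (le_lt_dec 1 m); [destruct (le_lt_dec m n)|];
    [|rewrite vsort_out by lia; lra..].
  rewrite vsort_in by lia. apply Hw, (sorted_agents_spec n w), nth_In.
  rewrite length_sorted_agents. lia.
Qed.

Lemma kfind_le n w B m : (kfind n w B m <= m)%nat.
Proof. induction m; simpl; auto. destruct (Rle_dec _ _); lia. Qed.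

Lemma kfind_admissible n w B m :
  kfind n w B m = 0%nat \/ Bsum n w B (kfind n w B m) <= vsort n w (kfind n w B m).
Proof. induction m; simpl; auto. destruct (Rle_dec _ _); auto. Qed.

Lemma kfind_maximal n w B m j : (kfind n w B m < j <= m)%nat ->
  ~ (Bsum n w B j <= vsort n w j).
Proof.
  induction m as [|m IH]; simpl; intros H; [lia|].
  destruct (Rle_dec _ _); [lia|].
  destruct (Nat.eq_dec j (S m)) as [->|]; auto. apply IH; lia.
Qed.

Lemma kfind_char n w B m k : (k <= m)%nat ->
  (k = 0%nat \/ Bsum n w B k <= vsort n w k) ->
  (forall j, (k < j <= m)%nat -> ~ (Bsum n w B j <= vsort n w j)) ->
  kfind n w B m = k.
Proof.
  induction m as [|m IH]; simpl; intros H1 H2 H3; [lia|].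
  destruct (Rle_dec _ _) as [Hle|Hgt].
  - destruct (Nat.eq_dec k (S m)); auto. exfalso; apply (H3 (S m)); auto; lia.
  - destruct (Nat.eq_dec k (S m)) as [->|]; [destruct H2; [lia|tauto]|].
    apply IH; [lia|auto|]. intros j Hj; apply H3; lia.
Qed.

Lemma kfind_ext n w1 w2 B m :
  (forall j, (j <= m)%nat ->
     (Bsum n w1 B j <= vsort n w1 j <-> Bsum n w2 B j <= vsort n w2 j)) ->
  kfind n w1 B m = kfind n w2 B m.
Proof.
  induction m as [|m IH]; simpl; intros H; auto.
  destruct (Rle_dec _ _) as [a|a], (Rle_dec (Bsum n w2 B (S m)) _) as [b|b].
  - reflexivity.
  - exfalso; apply b, H; auto.
  - exfalso; apply a, H; auto.
  - apply IH; intros; apply H; lia.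
Qed.

(* Agent i's allocation as a function of the data it depends on: the number k
   of budget-limited winners, the rank r of i, the winners' total budget T,
   the next value W = v_(k+1), and i's budget b. *)
Definition allocation_rule (k r : nat) (T W b : R) : R :=
  if Rlt_dec W T then (if (r <? k)%nat then b / T else 0)
  else (if (r <? k)%nat then b / W else if Nat.eqb r k then 1 - T / W else 0).

Lemma alloc_rule n B w i : alloc n B w i =
  allocation_rule (kstar n w B) (rank n w i) (Bsum n w B (kstar n w B))
    (vsort n w (S (kstar n w B))) (B i).
Proof. reflexivity. Qed.

(* Division by 0 yields 0 for Coq's reals, so b need not be positive. *)
Lemma div_nonneg a b : 0 <= a -> 0 <= b -> 0 <= a / b.
Proof.
  intros Ha Hb. destruct (Req_dec b 0) as [->|]; [unfold Rdiv; rewrite Rinv_0; lra|].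
  apply Rdiv_le_0_compat; lra.
Qed.

Lemma allocation_rule_nonneg k r T W b : 0 <= T -> 0 <= W -> 0 <= b ->
  0 <= allocation_rule k r T W b.
Proof.
  intros HT HW Hb. unfold allocation_rule.
  destruct (Rlt_dec W T), (r <? k)%nat; try apply div_nonneg; try lra.
  destruct (Nat.eqb r k); [|lra].
  destruct (Rle_lt_or_eq_dec 0 W HW) as [HWpos|<-]; [|unfold Rdiv; rewrite Rinv_0; lra].
  assert (T / W <= 1) by (apply (Rdiv_le_1 T W HWpos); lra). lra.
Qed.

Lemma allocation_rule_winner k r T W b : (r < k)%nat -> 0 < T ->
  Rmax T W * allocation_rule k r T W b = b.
Proof.
  intros Hr HT. unfold allocation_rule. apply Nat.ltb_lt in Hr. rewrite Hr.
  destruct (Rlt_dec W T).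
  - rewrite Rmax_left by lra. field. lra.
  - rewrite Rmax_right by lra. field. lra.
Qed.

(* A non-winner with value V gets at most b / V: either nothing, or, as the
   marginal agent (r = k, W = V), the residual 1 - T/V with V < T + b. *)
Lemma allocation_rule_loser k r T W b V : (k <= r)%nat -> 0 <= b -> 0 < V ->
  (r = k -> W = V /\ V < T + b) -> V * allocation_rule k r T W b <= b.
Proof.
  intros Hr Hb HV Hmarg. unfold allocation_rule.
  replace (r <? k)%nat with false by (symmetry; apply Nat.ltb_ge; lia).
  destruct (Rlt_dec W T); [lra|].
  destruct (Nat.eqb_spec r k) as [E|]; [|lra].
  destruct (Hmarg E) as [-> HVT].
  replace (V * (1 - T / V)) with (V - T) by (field; lra). lra.
Qed.

Lemma alloc_nonneg n B w i : (forall j, (j < n)%nat -> 0 <= w j) ->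
  (forall j, (j < n)%nat -> 0 <= B j) -> 0 <= B i -> 0 <= alloc n B w i.
Proof.
  intros Hw HB Hi. rewrite alloc_rule.
  apply allocation_rule_nonneg; auto using Bsum_nonneg, vsort_nonneg.
Qed.

(* Non-winners: v_i x_i(v) <= B_i, since the marginal agent k+1 was not
   admissible, i.e. T + B_(k+1) > v_(k+1). *)
Lemma loser_value_bound n B v i : (i < n)%nat -> 0 < v i ->
  (forall j, (j < n)%nat -> 0 <= B j) ->
  ~ (rank n v i < kstar n v B)%nat -> v i * alloc n B v i <= B i.
Proof.
  intros Hi Hvi HB Hr. rewrite alloc_rule.
  apply allocation_rule_loser; auto; [lia|]. intros Hk.
  apply (rank_eq_iff n v i) in Hk as [Hkn Hnth]; auto.
  assert (HW : vsort n v (S (kstar n v B)) = v i)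
    by (rewrite vsort_in by lia; rewrite Nat.sub_1_r; simpl; rewrite Hnth; auto).
  split; auto.
  assert (Hmax := kfind_maximal n v B n (S (kstar n v B))
                    ltac:(pose proof (kfind_le n v B n); unfold kstar in *; lia)).
  rewrite Bsum_S, Hnth, HW in Hmax by auto. lra.
Qed.

Lemma winner_price n B v i : (i < n)%nat ->
  (forall j, (j < n)%nat -> 0 <= B j) -> 0 < B i ->
  (rank n v i < kstar n v B)%nat ->
  Rmax (Bsum n v B (kstar n v B)) (vsort n v (S (kstar n v B))) * alloc n B v i = B i.
Proof.
  intros Hi HB HBi Hr. rewrite alloc_rule.
  apply allocation_rule_winner; auto.
  apply (rank_lt_iff n v i) in Hr; auto.
  apply Rlt_le_trans with (B i); auto.
  apply (sum_budgets_ge B _ i); auto. intros y Hy. apply HB, (sorted_agents_spec n v).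
  rewrite <- (firstn_skipn (kstar n v B) (sorted_agents n v)). apply in_or_app; auto.
Qed.

Lemma upd_eq v i u : upd v i u i = u.
Proof. unfold upd; rewrite Nat.eqb_refl; auto. Qed.

Lemma upd_ne v i u j : j <> i -> upd v i u j = v j.
Proof. unfold upd; intros H; destruct (Nat.eqb_spec j i); congruence. Qed.

Section SortedPrefix.
Variable w : nat -> R.
Variable l : list nat.
Hypothesis l_sorted : StronglySorted (precedes w) l.

Lemma sorted_prefix_ge k x : In x (firstn k l) -> (k <= length l)%nat ->
  w (nth (k - 1) l 0%nat) <= w x.
Proof.
  intros Hx Hk. destruct (In_nth _ _ 0%nat Hx) as [j [Hj <-]].
  rewrite length_firstn in Hj. rewrite nth_firstn.
  replace (j <? k)%nat with true by (symmetry; apply Nat.ltb_lt; lia).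
  apply sorted_value_le; auto; lia.
Qed.

Lemma sorted_suffix_le k y : In y (skipn k l) ->
  (k < length l)%nat /\ w y <= w (nth k l 0%nat).
Proof.
  intros Hy. destruct (In_nth _ _ 0%nat Hy) as [j [Hj <-]].
  rewrite length_skipn in Hj. rewrite nth_skipn.
  split; [lia|]. apply sorted_value_le; auto; lia.
Qed.

End SortedPrefix.

Lemma precedes_upd_inv v i u x y : x <> i -> y <> i ->
  precedes v x y -> precedes (upd v i u) x y.
Proof. intros Hx Hy. unfold precedes. rewrite !upd_ne; auto. Qed.

Lemma raise_within_top n v i u k :
  let L := sorted_agents n v in
  In i (firstn k L) -> (forall y, In y (skipn k L) -> v y < u) ->
  exists P', Permutation P' (firstn k L) /\
             sorted_agents n (upd v i u) = P' ++ skipn k L.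
Proof.
  intros L HiP HQ.
  set (P := firstn k L) in *. set (Q := skipn k L) in *.
  set (L' := sorted_agents n (upd v i u)).
  assert (HL : L = P ++ Q) by (symmetry; apply firstn_skipn).
  assert (HndL : NoDup (P ++ Q)) by (rewrite <- HL; apply sorted_agents_NoDup).
  assert (HinL : forall x, In x (P ++ Q) <-> (x < n)%nat)
    by (intros x; rewrite <- HL; apply sorted_agents_spec).
  destruct (sorted_agents_spec n v) as [HsL _]. fold L in HsL. rewrite HL in HsL.
  destruct (StronglySorted_app_inv _ _ _ HsL) as [_ [HsQ HPQ]].
  assert (HiQ : forall y, In y Q -> y <> i).
  { intros y Hy ->. revert Hy.
    apply (StronglySorted_firstn_skipn_disjoint (precedes v)); auto.
    - apply precedes_irrefl.
    - apply sorted_agents_spec. }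
  set (P' := filter (fun x => if in_dec Nat.eq_dec x P then true else false) L').
  assert (HP' : forall x, In x P' <-> In x P).
  { intros x; unfold P'; rewrite filter_In.
    destruct (in_dec Nat.eq_dec x P) as [Hx|Hx]; [|intuition discriminate].
    split; auto. intros _. split; auto. apply (sorted_agents_spec n), HinL, in_or_app; auto. }
  assert (HL' : L' = P' ++ Q).
  { apply sorted_agents_unique.
    - apply StronglySorted_app.
      + apply StronglySorted_filter, sorted_agents_spec.
      + apply (StronglySorted_transfer (precedes v)); auto.
        intros x y Hx Hy. apply precedes_upd_inv; auto.
      + intros x y Hx Hy. apply HP' in Hx. destruct (Nat.eq_dec x i) as [->|Hxi].
        * left. rewrite upd_eq, upd_ne; auto.
        * apply precedes_upd_inv; auto.
    - intros x. rewrite in_app_iff, HP', <- in_app_iff. apply HinL. }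
  exists P'. split; auto.
  apply NoDup_Permutation.
  - assert (Hnd' : NoDup L') by apply sorted_agents_NoDup.
    rewrite HL' in Hnd'. exact (NoDup_app_remove_r _ _ Hnd').
  - exact (NoDup_app_remove_r _ _ HndL).
  - exact HP'.
Qed.

Section ReorderedBlock.
Variables (n : nat) (w w' : nat -> R) (P P' Q : list nat).
Hypothesis ranking : sorted_agents n w = P ++ Q.
Hypothesis ranking' : sorted_agents n w' = P' ++ Q.
Hypothesis block_perm : Permutation P' P.
Hypothesis suffix_values : forall y, In y Q -> w' y = w y.

Lemma reordered_block_length : length P' = length P.
Proof. apply Permutation_length, block_perm. Qed.

Lemma reordered_Bsum B m : (length P <= m)%nat -> Bsum n w' B m = Bsum n w B m.
Proof.
  intros Hm. unfold Bsum. rewrite ranking, ranking', !firstn_app, reordered_block_length.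
  rewrite (firstn_all2 P), (firstn_all2 P') by (rewrite ?reordered_block_length; lia).
  change (sum_budgets B (P' ++ firstn (m - length P) Q) =
          sum_budgets B (P ++ firstn (m - length P) Q)).
  rewrite !sum_budgets_app, (sum_budgets_perm B _ _ block_perm). reflexivity.
Qed.

Lemma reordered_vsort m : (length P < m)%nat -> vsort n w' m = vsort n w m.
Proof.
  intros Hm. destruct (Nat.le_gt_cases m n).
  - rewrite !vsort_in by lia. rewrite ranking, ranking', !app_nth2
      by (rewrite ?reordered_block_length; lia).
    rewrite reordered_block_length. apply suffix_values, nth_In.
    assert (length (P ++ Q) = n) by (rewrite <- ranking; apply length_sorted_agents).
    rewrite length_app in *. lia.
  - rewrite !vsort_out by lia. reflexivity.
Qed.

Lemma reordered_kstar B : kstar n w B = length P ->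
  Bsum n w B (length P) <= vsort n w' (length P) -> kstar n w' B = length P.
Proof.
  intros Hk Hadm. apply kfind_char.
  - rewrite <- Hk. apply kfind_le.
  - right. rewrite reordered_Bsum; auto.
  - intros j Hj. rewrite reordered_Bsum, reordered_vsort by lia.
    apply (kfind_maximal n w B n). unfold kstar in Hk. lia.
Qed.

End ReorderedBlock.

(* Above the price max(T, v_(k+1)), a winner's allocation does not depend on
   its value: the ranking only changes inside the block of the k winners, so
   k, T, v_(k+1) and the winner status of i are unchanged. *)
Lemma winner_alloc_stable n B v i u : (i < n)%nat ->
  (rank n v i < kstar n v B)%nat ->
  vsort n v (S (kstar n v B)) < u -> Bsum n v B (kstar n v B) <= u ->
  alloc n B (upd v i u) i = alloc n B v i.
Proof.
  intros Hi Hr HW HT.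
  set (k := kstar n v B) in *. set (L := sorted_agents n v).
  assert (HsL : StronglySorted (precedes v) L) by apply sorted_agents_spec.
  assert (HiP : In i (firstn k L)) by (apply rank_lt_iff; auto).
  assert (HQ : forall y, In y (skipn k L) -> v y < u).
  { intros y Hy. destruct (sorted_suffix_le v L HsL k y Hy) as [Hk Hle].
    rewrite vsort_in in HW by (unfold L in Hk; rewrite length_sorted_agents in Hk; lia).
    rewrite Nat.sub_1_r in HW. simpl in HW. fold L in HW. lra. }
  destruct (raise_within_top n v i u k HiP HQ) as [P' [Hperm HL']].
  assert (HL : L = firstn k L ++ skipn k L) by (symmetry; apply firstn_skipn).
  assert (Hkn : (k <= n)%nat) by apply kfind_le.
  assert (HlenP : length (firstn k L) = k)
    by (rewrite length_firstn; unfold L; rewrite length_sorted_agents; lia).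
  assert (HlenP' : length P' = k) by (rewrite (Permutation_length Hperm); auto).
  assert (Hsuffix : forall y, In y (skipn k L) -> upd v i u y = v y).
  { intros y Hy. apply upd_ne. intros ->. revert Hy.
    apply (StronglySorted_firstn_skipn_disjoint (precedes v)); auto.
    apply precedes_irrefl. }
  (* the new k-th value is still at least T: it is u or the value of a winner *)
  assert (Hadm : Bsum n v B k <= vsort n (upd v i u) k).
  { destruct (kfind_admissible n v B n) as [|Hk]; change (kfind n v B n) with k in *; [lia|].
    rewrite vsort_in in Hk |- * by lia. rewrite HL', app_nth1 by lia.
    set (x := nth (k - 1) P' 0%nat).
    assert (Hx : In x (firstn k L)) by (apply (Permutation_in _ Hperm), nth_In; lia).
    destruct (Nat.eq_dec x i) as [->|Hxi]; [rewrite upd_eq; lra|].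
    rewrite upd_ne by auto. eapply Rle_trans; [exact Hk|].
    apply sorted_prefix_ge; auto. unfold L; rewrite length_sorted_agents; lia. }
  rewrite <- HlenP in Hadm.
  assert (HK := reordered_kstar n v _ _ P' _ HL HL' Hperm Hsuffix B (eq_sym HlenP) Hadm).
  rewrite HlenP in HK, Hadm.
  assert (Hr' : (rank n (upd v i u) i < k)%nat).
  { apply rank_lt_iff; auto. rewrite HL', firstn_app, (firstn_all2 P') by lia.
    apply in_or_app; left. apply (Permutation_in _ (Permutation_sym Hperm)), HiP. }
  rewrite !alloc_rule, HK. fold k.
  rewrite (reordered_Bsum n v _ _ P' _ HL HL' Hperm), (reordered_vsort n v _ _ P' _ HL HL' Hperm)
    by (auto; lia).
  unfold allocation_rule. apply Nat.ltb_lt in Hr, Hr'. rewrite Hr, Hr'. reflexivity.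
Qed.

(* For a winner
   p = max(T, v_(k+1)); for a non-winner p = v_i and the range is empty. *)
Lemma threshold_price n B v i : (i < n)%nat ->
  (forall j, (j < n)%nat -> 0 < v j) -> (forall j, (j < n)%nat -> 0 < B j) ->
  exists p, 0 <= p /\ p * alloc n B v i <= B i /\
    (forall u, p < u < v i -> alloc n B (upd v i u) i = alloc n B v i).
Proof.
  intros Hi Hv HB.
  assert (HB0 : forall j, (j < n)%nat -> 0 <= B j) by (intros j Hj; left; auto).
  destruct (lt_dec (rank n v i) (kstar n v B)) as [Hw|Hl].
  - exists (Rmax (Bsum n v B (kstar n v B)) (vsort n v (S (kstar n v B)))).
    split; [|split].
    + apply Rle_trans with (Bsum n v B (kstar n v B)); [apply Bsum_nonneg|apply Rmax_l]; auto.
    + rewrite winner_price; auto; lra.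
    + intros u [Hu _]. apply Rmax_Rlt in Hu as [HT HW].
      apply winner_alloc_stable; auto; lra.
  - exists (v i). split; [left; auto|split; [|intros u Hu; lra]].
    apply loser_value_bound; auto.
Qed.

Lemma payment_below_threshold (f : R -> R) (V p X : R) :
  0 <= V -> 0 <= p -> 0 <= X -> ex_RInt f 0 V ->
  (forall u, 0 < u < V -> 0 <= f u) -> (forall u, p < u < V -> f u = X) ->
  V * X - RInt f 0 V <= p * X.
Proof.
  intros HV Hp HX Hint Hf0 HfX.
  destruct (Rle_dec V p) as [HVp|HpV].
  - assert (0 <= RInt f 0 V) by (apply RInt_ge_0; auto).
    assert (V * X <= p * X) by (apply Rmult_le_compat_r; auto). lra.
  - assert (Hint1 : ex_RInt f 0 p)
      by (apply (ex_RInt_Chasles_1 (V := R_CompleteNormedModule)) with V; auto; lra).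
    assert (Hint2 : ex_RInt f p V)
      by (apply (ex_RInt_Chasles_2 (V := R_CompleteNormedModule)) with 0; auto; lra).
    rewrite <- (RInt_Chasles (V := R_CompleteNormedModule) f 0 p V Hint1 Hint2).
    assert (0 <= RInt f 0 p) by (apply RInt_ge_0; auto; intros u Hu; apply Hf0; lra).
    rewrite (RInt_ext (V := R_CompleteNormedModule) f (fun _ => X) p V)
      by (intros u Hu; rewrite Rmin_left, Rmax_right in Hu by lra; apply HfX; auto).
    rewrite (RInt_const (V := R_CompleteNormedModule)).
    change (scal (V - p) X) with ((V - p) * X).
    change (plus (RInt f 0 p) ((V - p) * X)) with (RInt f 0 p + (V - p) * X). lra.
Qed.

(* The allocation curve u |-> x_i(u, v_-i) can only change its form where u
   crosses a breakpoint: another agent's value, or a sum of budgets of some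
   set of agents (a candidate for T). *)
Definition subset_sums (B : nat -> R) (l : list nat) : list R :=
  fold_right (fun a acc => acc ++ map (Rplus (B a)) acc) [0] l.

Lemma sum_budgets_filter_in B f l : In (sum_budgets B (filter f l)) (subset_sums B l).
Proof.
  induction l as [|a l IH]; simpl; auto.
  apply in_or_app. destruct (f a); [right|left; auto].
  change (In (B a + sum_budgets B (filter f l)) (map (Rplus (B a)) (subset_sums B l))).
  apply in_map; auto.
Qed.

Lemma Bsum_in_subset_sums n w B k : In (Bsum n w B k) (subset_sums B (seq 0 n)).
Proof.
  set (P := firstn k (sorted_agents n w)).
  change (In (sum_budgets B P) (subset_sums B (seq 0 n))).
  rewrite (sum_budgets_perm B P (filter (fun x => if in_dec Nat.eq_dec x P then true else false)
                                        (seq 0 n))).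
  { apply sum_budgets_filter_in. }
  apply NoDup_Permutation.
  - assert (Hnd := sorted_agents_NoDup n w).
    rewrite <- (firstn_skipn k) in Hnd. exact (NoDup_app_remove_r _ _ Hnd).
  - apply NoDup_filter, seq_NoDup.
  - intros x. rewrite filter_In, in_seq.
    destruct (in_dec Nat.eq_dec x P) as [Hx|Hx]; [|intuition discriminate].
    split; auto. intros _. split; auto.
    assert (Hn : In x (sorted_agents n w))
      by (rewrite <- (firstn_skipn k); apply in_or_app; auto).
    apply sorted_agents_spec in Hn. lia.
Qed.

Definition breakpoints (n : nat) (v B : nat -> R) : list R :=
  map v (seq 0 n) ++ subset_sums B (seq 0 n).

Definition same_side (C : list R) (y m : R) : Prop :=
  forall c, In c C -> (y < c <-> m < c) /\ (c < y <-> c < m).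

Lemma same_side_le C y m c : same_side C y m -> In c C -> (c <= y <-> c <= m).
Proof.
  intros HS Hc. destruct (HS c Hc) as [H1 _].
  split; intros H; apply Rnot_lt_le; intros H'; apply H1 in H'; lra.
Qed.

Lemma same_side_in_cell C c d y m : (forall x, In x C -> ~ (c < x < d)) ->
  c < y < d -> c < m < d -> same_side C y m.
Proof.
  intros Hfree Hy Hm z Hz. specialize (Hfree z Hz).
  destruct (Rle_dec z c); [|destruct (Rle_dec d z)]; [split; split; intros; lra..|].
  exfalso; apply Hfree; lra.
Qed.

Lemma vsort_own_rank n w i : (i < n)%nat -> vsort n w (S (rank n w i)) = w i.
Proof.
  intros Hi. destruct (proj1 (rank_eq_iff n w i (rank n w i) Hi) eq_refl) as [Hr Hnth].
  rewrite vsort_in by lia. rewrite Nat.sub_1_r. simpl. rewrite Hnth. reflexivity.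
Qed.

Section Cell.
Variables (n : nat) (v B : nat -> R) (i : nat) (y m : R).
Hypothesis Hi : (i < n)%nat.
Hypothesis cell : same_side (breakpoints n v B) y m.

Lemma cell_ranking : sorted_agents n (upd v i y) = sorted_agents n (upd v i m).
Proof.
  apply sorted_agents_ext. intros a b Ha Hb.
  assert (Hval : forall x, (x < n)%nat -> same_side [v x] y m).
  { intros x Hx c [<-|[]]. apply cell, in_or_app; left. apply in_map, in_seq. lia. }
  unfold upd. destruct (Nat.eqb_spec a i), (Nat.eqb_spec b i).
  - lra.
  - apply (Hval b Hb); simpl; auto.
  - apply (Hval a Ha); simpl; auto.
  - tauto.
Qed.

Lemma cell_rank : rank n (upd v i y) i = rank n (upd v i m) i.
Proof. unfold rank. rewrite cell_ranking. reflexivity. Qed.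

Lemma cell_Bsum k : Bsum n (upd v i y) B k = Bsum n (upd v i m) B k.
Proof. unfold Bsum. rewrite cell_ranking. reflexivity. Qed.

Lemma cell_vsort j : rank n (upd v i m) i <> j ->
  vsort n (upd v i y) (S j) = vsort n (upd v i m) (S j).
Proof.
  intros Hj. unfold vsort. rewrite cell_ranking.
  destruct ((1 <=? S j) && (S j <=? n))%bool eqn:E; auto.
  apply Bool.andb_true_iff in E as [_ E]. apply Nat.leb_le in E.
  rewrite Nat.sub_1_r; simpl.
  assert (Hne : nth j (sorted_agents n (upd v i m)) 0%nat <> i)
    by (intros Heq; apply Hj, rank_eq_iff; auto).
  rewrite !upd_ne; auto.
Qed.

Lemma cell_kstar : kstar n (upd v i y) B = kstar n (upd v i m) B.
Proof.
  apply kfind_ext. intros [|j] _; [rewrite !vsort_out by lia; rewrite cell_Bsum; tauto|].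
  rewrite cell_Bsum.
  destruct (Nat.eq_dec (rank n (upd v i m) i) j) as [<-|Hj]; [|rewrite cell_vsort; tauto].
  rewrite (vsort_own_rank n (upd v i m)), upd_eq by auto.
  rewrite <- cell_rank, vsort_own_rank, upd_eq by auto.
  apply (same_side_le _ y m _ cell). apply in_or_app; right; apply Bsum_in_subset_sums.
Qed.

End Cell.

Lemma alloc_on_cell n B v i c d : (i < n)%nat ->
  (forall j, (j < n)%nat -> 0 <= B j) -> c < d ->
  (forall x, In x (breakpoints n v B) -> ~ (c < x < d)) ->
  (forall y, c < y < d -> alloc n B (upd v i y) i = alloc n B (upd v i ((c + d) / 2)) i) \/
  (exists T, 0 <= T <= c /\
     forall y, c < y < d -> alloc n B (upd v i y) i = 1 - T / y).
Proof.
  intros Hi HB Hcd Hfree. set (m := (c + d) / 2).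
  assert (Hm : c < m < d) by (unfold m; lra).
  assert (Hcell : forall y, c < y < d -> same_side (breakpoints n v B) y m)
    by (intros y Hy; apply (same_side_in_cell _ c d); auto).
  set (w := upd v i m). set (k := kstar n w B). set (T := Bsum n w B k).
  assert (Halloc : forall y, c < y < d -> alloc n B (upd v i y) i =
            allocation_rule k (rank n w i) T (vsort n (upd v i y) (S k)) (B i)).
  { intros y Hy. rewrite alloc_rule, (cell_kstar n v B i y m), (cell_rank n v B i y m),
      (cell_Bsum n v B i y m); auto. }
  destruct (Nat.eq_dec (rank n w i) k) as [Hr|Hr].
  - (* i is the marginal agent, so v_(k+1) is its own value *)
    assert (HW : forall y, c < y < d -> vsort n (upd v i y) (S k) = y).
    { intros y Hy. rewrite <- Hr. unfold w.
      rewrite <- (cell_rank n v B i y m), vsort_own_rank, upd_eq; auto. }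
    assert (Hrule : forall y, c < y < d ->
              alloc n B (upd v i y) i = if Rlt_dec y T then 0 else 1 - T / y).
    { intros y Hy. rewrite Halloc, HW by auto. unfold allocation_rule.
      rewrite Hr, Nat.ltb_irrefl, Nat.eqb_refl. reflexivity. }
    assert (HT : In T (breakpoints n v B))
      by (apply in_or_app; right; apply Bsum_in_subset_sums).
    destruct (Rlt_dec m T) as [HmT|HTm].
    + left. intros y Hy.
      assert (HyT : y < T) by (apply (Hcell y Hy T HT); auto).
      unfold w. rewrite (Hrule y Hy), (Hrule m Hm).
      destruct (Rlt_dec y T); [|contradiction]. destruct (Rlt_dec m T); [|contradiction].
      reflexivity.
    + right. exists T.
      assert (HTc : T <= c) by (apply Rnot_lt_le; intros HcT; apply (Hfree T HT); lra).
      split; [split; auto; apply Bsum_nonneg; auto|].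
      intros y Hy. rewrite Hrule by auto. destruct (Rlt_dec y T); [lra|reflexivity].
  - left. intros y Hy. unfold w. rewrite (Halloc y Hy), (Halloc m Hm).
    rewrite (cell_vsort n v B i y m); auto.
Qed.

(* The curve 1 - T/y is integrable on [c, d] when 0 <= T <= c: it is
   constant if T = 0 and continuous on [c, d] otherwise. *)
Lemma ex_RInt_one_minus_div T c d : 0 <= T <= c -> c < d ->
  ex_RInt (fun y => 1 - T / y) c d.
Proof.
  intros HT Hcd. destruct (Req_dec T 0) as [->|HT0].
  - apply (ex_RInt_ext (fun _ => 1)); [intros y _; unfold Rdiv; lra|].
    apply ex_RInt_const.
  - apply (ex_RInt_continuous (V := R_CompleteNormedModule)). intros z Hz.
    rewrite Rmin_left, Rmax_right in Hz by lra.
    apply (ex_derive_continuous (K := R_AbsRing) (V := R_NormedModule)).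
    auto_derive. lra.
Qed.

Lemma ex_RInt_piecewise (f : R -> R) (C : list R) a b : a <= b ->
  (forall c d, a <= c -> c < d -> d <= b ->
     (forall x, In x C -> ~ (c < x < d)) -> ex_RInt f c d) ->
  ex_RInt f a b.
Proof.
  revert a b; induction C as [|x C IH]; intros a b Hab H.
  - destruct (Req_dec a b) as [<-|]; [apply ex_RInt_point|].
    apply H; try lra. intros x [].
  - assert (Hsplit : forall a' b', a <= a' -> a' <= b' -> b' <= b -> ~ (a' < x < b') ->
              ex_RInt f a' b').
    { intros a' b' H1 H2 H3 Hx. apply IH; auto. intros c d Hc Hcd Hd HC.
      apply H; try lra. intros z [<-|Hz]; [lra|auto]. }
    destruct (Rlt_dec a x); [destruct (Rlt_dec x b)|].
    + apply ex_RInt_Chasles with x; apply Hsplit; lra.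
    + apply Hsplit; lra.
    + apply Hsplit; lra.
Qed.

Lemma alloc_integrable n B v i a b : (i < n)%nat ->
  (forall j, (j < n)%nat -> 0 <= B j) -> 0 <= a <= b ->
  ex_RInt (fun u => alloc n B (upd v i u) i) a b.
Proof.
  intros Hi HB Hab. apply (ex_RInt_piecewise _ (breakpoints n v B)); [lra|].
  intros c d Hc Hcd Hd Hfree.
  destruct (alloc_on_cell n B v i c d Hi HB Hcd Hfree) as [Hconst|[T [HT Hform]]].
  - apply (ex_RInt_ext (fun _ => alloc n B (upd v i ((c + d) / 2)) i)).
    + intros y Hy. rewrite Rmin_left, Rmax_right in Hy by lra. symmetry; auto.
    + apply ex_RInt_const.
  - apply (ex_RInt_ext (fun y => 1 - T / y)).
    + intros y Hy. rewrite Rmin_left, Rmax_right in Hy by lra. symmetry; auto.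
    + apply ex_RInt_one_minus_div; auto.
Qed.

Theorem mainTheorem7 (n : nat) (v B : nat -> R)
  (hv : forall j, (j < n)%nat -> 0 < v j)
  (hB : forall j, (j < n)%nat -> 0 < B j)
  (i : nat) (hi : (i < n)%nat) :
  { pr : Riemann_integrable (fun u => alloc n B (upd v i u) i) 0 (v i) &
    v i * alloc n B v i - RiemannInt pr <= B i }.
Proof.
  assert (HB0 : forall j, (j < n)%nat -> 0 <= B j) by (intros j Hj; left; auto).
  assert (Hvi := hv i hi).
  assert (Hint := alloc_integrable n B v i 0 (v i) hi HB0 ltac:(lra)).
  exists (ex_RInt_Reals_0 _ _ _ Hint). rewrite <- RInt_Reals.
  destruct (threshold_price n B v i hi hv hB) as [p [Hp [HpX Hstable]]].
  assert (Hnonneg : forall u, 0 <= u -> 0 <= alloc n B (upd v i u) i).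
  { intros u Hu. apply alloc_nonneg; auto.
    intros j Hj. unfold upd. destruct (Nat.eqb j i); [auto|left; auto]. }
  eapply Rle_trans; [|exact HpX].
  apply payment_below_threshold; auto.
  - lra.
  - apply alloc_nonneg; auto. intros j Hj; left; auto.
  - intros u Hu; apply Hnonneg; lra.
Qed.
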